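(* Let $n\ge 2$ be an integer. Let $f(z)=\sum_{j\ge 1} b_j z^j$ be analytic in the unit disc $\mathbb{D}$ with $b_j\ge 0$ for all $j\ge 1$ and $\|f\|_{\mathcal{B}}\le 1$, and suppose $f$ is extremal for the restricted problem $$\sup\Big\{ \mathcal{F}_n(g)=\sum_{k=1}^n k|c_k|^2 \,:\, \|g\|_{\mathcal{B}}\le 1,\ g(z)=\sum_{k=1}^\infty c_k z^k,\ c_j\ge 0 \text{ for all } j\ge 1\Big\},$$ i.e. $f$ attains this supremum. If $1\le k<m\le n$ and $b_k>0$, then $$ b_m\le \frac{m-k}{2m}\, b_k. $$
   Context: $\mathbb{D}$ is the open unit disc in $\mathbb{C}$. The Bloch space $\mathcal{B}$ consists of analytic functions $f$ on $\mathbb{D}$ with finite norm $\|f\|_{\mathcal{B}}=|f(0)|+\sup_{z\in\mathbb{D}}(1-|z|^2)|f'(z)|$. *)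

From Stdlib Require Import Reals.
From Coquelicot Require Import Coquelicot.
Open Scope R_scope.

Definition in_disc (z : C) : Prop := Cmod z < 1.

Definition has_taylor (c : nat -> R) (g : C -> C) : Prop :=
  forall z : C, in_disc z ->
    is_series (fun k : nat => Cmult (RtoC (c k)) (pow_n z k)) (g z).

Definition bloch_norm (g : C -> C) : Rbar :=
  Rbar_plus (Finite (Cmod (g 0)))
    (Lub_Rbar (fun r : R => exists (z l : C),
        in_disc z /\ is_derive (K := C_AbsRing) (V := C_NormedModule) g z l
        /\ r = (1 - Cmod z ^ 2) * Cmod l)).

Definition bloch_admissible (c : nat -> R) (g : C -> C) : Prop :=
  c 0%nat = 0 /\ (forall j : nat, (1 <= j)%nat -> 0 <= c j) /\
  has_taylor c g /\ Rbar_le (bloch_norm g) (Finite 1).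

Definition taylor_Fn (n : nat) (c : nat -> R) : R :=
  sum_n_m (fun k : nat => INR k * (Rabs (c k)) ^ 2) 1 n.

(* Compare f with g = f - b_k z^k + c z^m, where c = (k/m) b_k.
   Since g has nonnegative coefficients, for |z| = r we get
   |g'(z)| <= g'(r) = f'(r) - k b_k r^(k-1) + m c r^(m-1) <= f'(r),
   so g is again admissible, and F_n(g) <= F_n(f) reads k b_k (2 b_m + c - b_k) <= 0.
   The analytic input is termwise differentiation of a complex power series, obtained from
   the bound rho^2 |(z+h)^j - z^j - j z^(j-1) h| <= j^2 rho^j |h|^2 for |z| + |h| <= rho. *)

From Stdlib Require Import Reals Lia Psatz.
From Coquelicot Require Import Coquelicot.
Open Scope R_scope.

Lemma is_series_Re (u : nat -> C) (l : C) :
  is_series (K := C_AbsRing) (V := C_NormedModule) u l ->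
  is_series (K := R_AbsRing) (V := R_NormedModule) (fun j => Re (u j)) (Re l).
Proof.
  intros Hu.
  assert (Hsum : forall N, sum_n (fun j => Re (u j)) N = Re (sum_n u N)).
  { induction N as [|N IH]; [now rewrite !sum_O|now rewrite !sum_Sn, IH]. }
  apply (filterlim_ext (fun N => Re (sum_n u N))); [intros; now rewrite Hsum|].
  eapply filterlim_comp; [exact Hu|].
  apply filterlim_locally; intros eps; exists eps; now intros y [Hre _].
Qed.

Lemma is_series_Cmod_le (u : nat -> C) (l : C) (v : nat -> R) (s : R) :
  is_series (K := C_AbsRing) (V := C_NormedModule) u l -> is_series v s ->
  (forall j, Cmod (u j) <= v j) -> Cmod l <= s.
Proof.
  intros Hu Hv Huv.
  apply (is_lim_seq_le (fun N => norm (sum_n u N)) (sum_n v) (norm l) s);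
    [|eapply filterlim_comp; [exact Hu|apply filterlim_norm]|exact Hv].
  intros N; eapply Rle_trans; [apply (norm_sum_n_m u)|apply sum_n_m_le; intros; apply Huv].
Qed.

Lemma sum_n_delta {G : AbelianMonoid} (k N : nat) (x : G) :
  sum_n (fun j => if Nat.eqb j k then x else zero) N = if Nat.leb k N then x else zero.
Proof.
  induction N as [|N IH].
  - rewrite sum_O; now destruct k.
  - rewrite sum_Sn, IH.
    destruct (Nat.leb_spec k N), (Nat.eqb_spec (S N) k), (Nat.leb_spec k (S N)); try lia;
      now rewrite ?plus_zero_l, ?plus_zero_r.
Qed.

Lemma is_series_delta {K : AbsRing} {V : NormedModule K} (k : nat) (x : V) :
  is_series (fun j => if Nat.eqb j k then x else zero) x.
Proof.
  apply (filterlim_ext_loc (fun _ => x)); [|apply filterlim_const].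
  exists k; intros N HN. rewrite sum_n_delta.
  now replace (Nat.leb k N) with true by (symmetry; apply Nat.leb_le; lia).
Qed.

Lemma sum_n_m_delta (k n : nat) (x : R) : (1 <= k <= n)%nat ->
  sum_n_m (fun j => if Nat.eqb j k then x else 0) 1 n = x.
Proof.
  intros Hk. rewrite (sum_n_m_sum_n (G := R_AbelianGroup)) by lia.
  change 0 with (@zero R_AbelianGroup). rewrite !sum_n_delta.
  replace (Nat.leb k n) with true by (symmetry; apply Nat.leb_le; lia).
  replace (Nat.leb k 0) with false by (symmetry; apply Nat.leb_gt; lia).
  apply minus_zero_r.
Qed.

Lemma bloch_norm_leP (g : C -> C) (M : R) :
  Rbar_le (bloch_norm g) (Finite M) <->
  (forall z l, in_disc z -> is_derive (K := C_AbsRing) (V := C_NormedModule) g z l ->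
     Cmod (g 0) + (1 - Cmod z ^ 2) * Cmod l <= M).
Proof.
  unfold bloch_norm.
  set (E := fun r : R => exists z l : C, in_disc z /\
        is_derive (K := C_AbsRing) (V := C_NormedModule) g z l /\ r = (1 - Cmod z ^ 2) * Cmod l).
  destruct (Lub_Rbar_correct E) as [Hub Hleast].
  split.
  - intros Hle z l Hz Hd.
    assert (Hl : Rbar_le ((1 - Cmod z ^ 2) * Cmod l) (Lub_Rbar E)) by (apply Hub; now exists z, l).
    destruct (Lub_Rbar E); simpl in *; lra || contradiction.
  - intros Hbound.
    assert (Hl : Rbar_le (Lub_Rbar E) (M - Cmod (g 0))).
    { apply Hleast; intros r (z & l & Hz & Hd & ->); simpl.
      specialize (Hbound z l Hz Hd); lra. }
    destruct (Lub_Rbar E); simpl in *; lra || contradiction || exact I.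
Qed.

Definition pow_remainder (z h : C) (j : nat) : C :=
  (Cpow (z + h) j - Cpow z j - RtoC (INR j) * Cpow z (pred j) * h)%C.

Lemma pow_remainder_S (z h : C) (j : nat) :
  pow_remainder z h (S j) =
  ((z + h) * pow_remainder z h j + RtoC (INR j) * Cpow z (pred j) * (h * h))%C.
Proof.
  unfold pow_remainder; destruct j as [|j]; [simpl; ring|].
  rewrite (S_INR (S j)), RtoC_plus; simpl Cpow; simpl pred; ring.
Qed.

Lemma Cmod_pow_remainder_le (z h : C) (rho : R) (j : nat) :
  Cmod z + Cmod h <= rho ->
  rho ^ 2 * Cmod (pow_remainder z h j) <= Cmod h ^ 2 * INR j ^ 2 * rho ^ j.
Proof.
  intros Hrho.
  assert (Hz := Cmod_ge_0 z); assert (Hh := Cmod_ge_0 h).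
  assert (Hzh : Cmod (z + h) <= rho) by (eapply Rle_trans; [apply Cmod_triangle|lra]).
  induction j as [|j IH].
  - unfold pow_remainder; simpl.
    replace (1 - 1 - RtoC 0 * 1 * h)%C with (RtoC 0) by ring. rewrite Cmod_0; lra.
  - assert (Hstep : Cmod (pow_remainder z h (S j)) <=
                    Cmod (z + h) * Cmod (pow_remainder z h j)
                    + INR j * Cmod z ^ pred j * Cmod h ^ 2).
    { rewrite pow_remainder_S. eapply Rle_trans; [apply Cmod_triangle|].
      rewrite !Cmod_mult, Cmod_R, Cmod_pow, Rabs_pos_eq by apply pos_INR. simpl; lra. }
    assert (Hpow : INR j * (rho ^ 2 * Cmod z ^ pred j) <= INR j * rho ^ S j).
    { destruct j as [|j]; [simpl; lra|].
      apply Rmult_le_compat_l; [apply pos_INR|]. simpl pred.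
      replace (rho ^ S (S j)) with (rho ^ 2 * rho ^ j) by (simpl; ring).
      apply Rmult_le_compat_l; [nra|apply pow_incr; lra]. }
    assert (HE := Cmod_ge_0 (pow_remainder z h j)).
    assert (Hj := pos_INR j).
    assert (Hrj := pow_le rho j ltac:(lra)).
    change (rho ^ S j) with (rho * rho ^ j) in *. rewrite S_INR.
    assert (Hrec : Cmod (z + h) * (rho ^ 2 * Cmod (pow_remainder z h j)) <=
                   rho * (Cmod h ^ 2 * INR j ^ 2 * rho ^ j))
      by (apply Rmult_le_compat; [apply Cmod_ge_0|nra|lra|exact IH]).
    assert (Hlin : Cmod h ^ 2 * (INR j * (rho ^ 2 * Cmod z ^ pred j)) <=
                   Cmod h ^ 2 * (INR j * (rho * rho ^ j)))
      by (apply Rmult_le_compat_l; nra).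
    assert (0 <= Cmod h ^ 2 * rho * rho ^ j) by (apply Rmult_le_pos; nra).
    nra.
Qed.

Lemma is_derive_C_quadratic_remainder (g : C -> C) (z D : C) (K delta : R) :
  0 < delta ->
  (forall h, Cmod h < delta -> Cmod (g (z + h) - g z - h * D)%C <= K * Cmod h ^ 2) ->
  is_derive (K := C_AbsRing) (V := C_NormedModule) g z D.
Proof.
  intros Hdelta Hrem. split; [apply is_linear_scal_l|].
  intros x Hx.
  apply (is_filter_lim_locally_unique (K := C_AbsRing) (V := AbsRing_NormedModule C_AbsRing)) in Hx.
  subst x. intros eps.
  assert (HK := Rabs_pos K).
  assert (Hpos : 0 < Rmin delta (eps / (Rabs K + 1))).
  { apply Rmin_pos; [lra|apply Rdiv_lt_0_compat; [apply cond_pos|lra]]. }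
  exists (mkposreal _ Hpos). intros y Hy.
  change (Cmod (y - z) < Rmin delta (eps / (Rabs K + 1))) in Hy.
  change (Cmod (g y - g z - (y - z) * D)%C <= eps * Cmod (y - z)).
  assert (Hy1 := Rlt_le_trans _ _ _ Hy (Rmin_l _ _)).
  assert (Hy2 := Rlt_le_trans _ _ _ Hy (Rmin_r _ _)).
  specialize (Hrem (y - z)%C Hy1).
  replace (z + (y - z))%C with (y : C) in Hrem by (change C in y; ring).
  assert (Hh := Cmod_ge_0 (y - z)).
  assert (HKh : Rabs K * Cmod (y - z) <= eps).
  { apply (Rmult_le_reg_r (/ (Rabs K + 1))); [apply Rinv_0_lt_compat; lra|].
    apply Rle_trans with (Cmod (y - z)); [|left; exact Hy2].
    apply (Rmult_le_reg_r (Rabs K + 1)); [lra|]. field_simplify; nra. }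
  assert (Habs : K * Cmod (y - z) ^ 2 <= Rabs K * Cmod (y - z) ^ 2)
    by (apply Rmult_le_compat_r; [nra|apply Rle_abs]).
  nra.
Qed.

Lemma is_derive_C_unique (g : C -> C) (z l1 l2 : C) :
  is_derive (K := C_AbsRing) (V := C_NormedModule) g z l1 ->
  is_derive (K := C_AbsRing) (V := C_NormedModule) g z l2 -> l1 = l2.
Proof.
  intros H1 H2. now rewrite <- (is_C_derive_unique _ _ _ H1), (is_C_derive_unique _ _ _ H2).
Qed.

(* [j^2 a_j] is [a] differentiated twice up to index shifts, which preserve the radius. *)
Lemma CV_radius_sqr_weight (a : nat -> R) :
  CV_radius (fun j => INR j ^ 2 * a j) = CV_radius a.
Proof.
  rewrite (CV_radius_ext _ (PS_incr_1 (PS_derive (PS_incr_1 (PS_derive a))))).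
  - now rewrite CV_radius_incr_1, CV_radius_derive, CV_radius_incr_1, CV_radius_derive.
  - intros [|j]; [simpl; unfold zero; simpl; ring|unfold PS_incr_1, PS_derive; simpl; ring].
Qed.

Definition deriv_term (a : nat -> R) (z : C) (j : nat) : C :=
  (RtoC (INR j * a j) * Cpow z (pred j))%C.

Lemma Cmod_deriv_term_le (a : nat -> R) (z : C) (rho : R) (j : nat) :
  0 < rho -> Cmod z <= rho ->
  rho * Cmod (deriv_term a z j) <= Rabs (INR j ^ 2 * a j * rho ^ j).
Proof.
  intros Hrho Hz. unfold deriv_term.
  rewrite Cmod_mult, Cmod_R, Cmod_pow, !Rabs_mult, (Rabs_pos_eq (INR j)), (Rabs_pos_eq (INR j ^ 2)),
    (Rabs_pos_eq (rho ^ j)) by (apply pow_le || idtac; (apply pos_INR || lra)).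
  destruct j as [|j]; [simpl; lra|].
  assert (Hj : 1 <= INR (S j)) by (rewrite S_INR; assert (H := pos_INR j); lra).
  assert (Hzj : Cmod z ^ j <= rho ^ j) by (apply pow_incr; split; [apply Cmod_ge_0|exact Hz]).
  assert (Hz0 := pow_le _ j (Cmod_ge_0 z)).
  assert (Ha := Rabs_pos (a (S j))).
  simpl pred; simpl (rho ^ S j).
  assert (Rabs (a (S j)) * Cmod z ^ j <= Rabs (a (S j)) * rho ^ j)
    by (apply Rmult_le_compat_l; lra).
  assert (0 <= Rabs (a (S j)) * Cmod z ^ j) by (apply Rmult_le_pos; lra).
  set (N := INR (S j)) in *.
  replace (N ^ 2 * Rabs (a (S j)) * (rho * rho ^ j))
    with ((rho * N) * (N * (Rabs (a (S j)) * rho ^ j))) by ring.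
  replace (rho * (N * Rabs (a (S j)) * Cmod z ^ j))
    with ((rho * N) * (1 * (Rabs (a (S j)) * Cmod z ^ j))) by ring.
  apply Rmult_le_compat_l; [nra|apply Rmult_le_compat; lra].
Qed.

Section TaylorDerivative.

Variables (a : nat -> R) (g : C -> C).
Hypothesis Hg : has_taylor a g.

Lemma has_taylor_at_0 : g 0 = RtoC (a 0%nat).
Proof.
  assert (H0 := Hg 0 ltac:(unfold in_disc; rewrite Cmod_0; lra)).
  assert (Hdelta : is_series (K := C_AbsRing) (V := C_NormedModule)
                     (fun j => (RtoC (a j) * pow_n (K := C_Ring) (RtoC 0) j)%C) (RtoC (a 0%nat))).
  { eapply is_series_ext; [|apply (is_series_delta (K := C_AbsRing) 0 (RtoC (a 0%nat)))].
    intros [|j].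
    - change (RtoC (a 0%nat) = RtoC (a 0%nat) * 1)%C; ring.
    - change (RtoC 0 = RtoC (a (S j)) * (RtoC 0 * Cpow (RtoC 0) j))%C; ring. }
  exact (filterlim_locally_unique _ _ _ H0 Hdelta).
Qed.

Lemma has_taylor_radius (x : R) : 0 <= x < 1 -> Rbar_lt x (CV_radius a).
Proof.
  intros Hx. set (y := (x + 1) / 2).
  assert (Hy : in_disc (RtoC y)) by (unfold in_disc; rewrite Cmod_R, Rabs_pos_eq; unfold y; lra).
  assert (Hser : is_series (fun j => a j * y ^ j) (Re (g y))).
  { eapply is_series_ext; [|exact (is_series_Re _ _ (Hg _ Hy))].
    intros j; cbv beta; change (pow_n (K := C_Ring) (RtoC y) j) with (Cpow (RtoC y) j).
    rewrite <- RtoC_pow, <- RtoC_mult; reflexivity. }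
  destruct (filterlim_bounded (K := R_AbsRing) (fun j => a j * y ^ j)) as [M HM].
  { exists 0; apply ex_series_lim_0; eexists; exact Hser. }
  destruct (CV_radius_bounded a) as [Hub _].
  apply Rbar_lt_le_trans with y; [simpl; unfold y; lra|].
  apply Hub; now exists M.
Qed.

Lemma ex_series_Rabs_sqr_weight (rho : R) : 0 <= rho < 1 ->
  ex_series (fun j => Rabs (INR j ^ 2 * a j * rho ^ j)).
Proof.
  intros Hrho. apply CV_disk_inside.
  rewrite CV_radius_sqr_weight, Rabs_pos_eq by lra. now apply has_taylor_radius.
Qed.

Lemma taylor_remainder_le (z h D : C) (rho : R) :
  is_series (K := C_AbsRing) (V := C_NormedModule) (deriv_term a z) D ->
  0 < rho < 1 -> Cmod z + Cmod h <= rho ->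
  Cmod (g (z + h) - g z - h * D)%C <=
  Series (fun j => Rabs (INR j ^ 2 * a j * rho ^ j)) / rho ^ 2 * Cmod h ^ 2.
Proof.
  intros HD Hrho Hzh.
  assert (Hin : forall w, Cmod w <= rho -> in_disc w) by (intros w Hw; unfold in_disc; lra).
  assert (Hh := Cmod_ge_0 h).
  assert (Hsum : is_series (K := C_AbsRing) (V := C_NormedModule)
                   (fun j => RtoC (a j) * pow_remainder z h j)%C (g (z + h) - g z - h * D)%C).
  { assert (Hzh' : Cmod (z + h) <= rho) by (eapply Rle_trans; [apply Cmod_triangle|lra]).
    eapply is_series_ext;
      [|exact (is_series_minus _ _ _ _ (is_series_minus _ _ _ _ (Hg _ (Hin _ Hzh'))
                 (Hg _ (Hin z ltac:(lra)))) (is_series_scal_l (K := C_AbsRing) h _ _ HD))].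
    intros j; unfold deriv_term, pow_remainder; rewrite RtoC_mult.
    change ((RtoC (a j) * Cpow (z + h) j - RtoC (a j) * Cpow z j)
              - h * (RtoC (INR j) * RtoC (a j) * Cpow z (pred j))
            = RtoC (a j) * (Cpow (z + h) j - Cpow z j - RtoC (INR j) * Cpow z (pred j) * h))%C.
    ring. }
  apply (is_series_Cmod_le _ _
           (fun j => Rabs (INR j ^ 2 * a j * rho ^ j) / rho ^ 2 * Cmod h ^ 2) _ Hsum).
  - unfold Rdiv; rewrite Rmult_assoc.
    apply (is_series_ext (fun j => Rabs (INR j ^ 2 * a j * rho ^ j) * (/ rho ^ 2 * Cmod h ^ 2)));
      [intros; simpl; ring|].
    apply is_series_scal_r, Series_correct, ex_series_Rabs_sqr_weight; lra.
  - intros j. rewrite Cmod_mult, Cmod_R.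
    assert (HE := Cmod_pow_remainder_le z h rho j Hzh).
    assert (Hr2 : 0 < rho ^ 2) by nra.
    rewrite !Rabs_mult, (Rabs_pos_eq (INR j ^ 2)), (Rabs_pos_eq (rho ^ j))
      by (apply pow_le; (apply pos_INR || lra)).
    apply (Rmult_le_reg_l (rho ^ 2)); [exact Hr2|].
    replace (rho ^ 2 * (INR j ^ 2 * Rabs (a j) * rho ^ j / rho ^ 2 * Cmod h ^ 2))
      with (Rabs (a j) * (Cmod h ^ 2 * INR j ^ 2 * rho ^ j)) by (field; lra).
    replace (rho ^ 2 * (Rabs (a j) * Cmod (pow_remainder z h j)))
      with (Rabs (a j) * (rho ^ 2 * Cmod (pow_remainder z h j))) by ring.
    apply Rmult_le_compat_l; [apply Rabs_pos|exact HE].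
Qed.

Lemma has_taylor_is_derive (z : C) : in_disc z ->
  exists D, is_series (K := C_AbsRing) (V := C_NormedModule) (deriv_term a z) D /\
            is_derive (K := C_AbsRing) (V := C_NormedModule) g z D.
Proof.
  intros Hz. unfold in_disc in Hz.
  assert (Hz0 := Cmod_ge_0 z).
  set (rho := (1 + Cmod z) / 2).
  assert (Hrho : 0 < rho < 1) by (unfold rho; lra).
  assert (Hweight := ex_series_Rabs_sqr_weight rho ltac:(lra)).
  destruct (@ex_series_le C_AbsRing C_CompleteNormedModule (deriv_term a z)
              (fun j => / rho * Rabs (INR j ^ 2 * a j * rho ^ j))) as [D HD].
  - intros j. apply (Rmult_le_reg_l rho); [lra|].
    rewrite <- Rmult_assoc, Rinv_r, Rmult_1_l by lra.
    apply Cmod_deriv_term_le; unfold rho; lra.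
  - now apply (ex_series_scal_l (K := R_AbsRing) (V := R_NormedModule)).
  - exists D; split; [exact HD|].
    apply (is_derive_C_quadratic_remainder g z D
             (Series (fun j => Rabs (INR j ^ 2 * a j * rho ^ j)) / rho ^ 2) (rho - Cmod z));
      [unfold rho; lra|intros h Hh; apply taylor_remainder_le; auto; lra].
Qed.

Lemma taylor_deriv_Cmod_le (z l : C) (s : R) :
  (forall j, 0 <= a j) -> in_disc z ->
  is_derive (K := C_AbsRing) (V := C_NormedModule) g z l ->
  is_series (fun j => INR j * a j * Cmod z ^ pred j) s -> Cmod l <= s.
Proof.
  intros Ha Hz Hl Hs.
  destruct (has_taylor_is_derive z Hz) as (D & HD & HgD).
  rewrite (is_derive_C_unique _ _ _ _ Hl HgD).
  apply (is_series_Cmod_le _ _ _ _ HD Hs). intros j; unfold deriv_term.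
  rewrite Cmod_mult, Cmod_R, Cmod_pow, Rabs_pos_eq; [lra|].
  apply Rmult_le_pos; [apply pos_INR|apply Ha].
Qed.

Lemma taylor_deriv_real (r : R) (l : C) : 0 <= r < 1 ->
  is_derive (K := C_AbsRing) (V := C_NormedModule) g (RtoC r) l ->
  is_series (fun j => INR j * a j * r ^ pred j) (Re l).
Proof.
  intros Hr Hl.
  assert (Hin : in_disc (RtoC r)) by (unfold in_disc; rewrite Cmod_R, Rabs_pos_eq; lra).
  destruct (has_taylor_is_derive _ Hin) as (D & HD & HgD).
  rewrite (is_derive_C_unique _ _ _ _ Hl HgD).
  eapply is_series_ext; [|exact (is_series_Re _ _ HD)].
  intros j; unfold deriv_term; cbv beta. rewrite <- RtoC_pow, <- RtoC_mult; reflexivity.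
Qed.

End TaylorDerivative.

Definition add_monomial (a : nat -> R) (k : nat) (x : R) (j : nat) : R :=
  a j + if Nat.eqb j k then x else 0.

Lemma has_taylor_add_monomial (a : nat -> R) (g : C -> C) (k : nat) (x : R) :
  has_taylor a g -> has_taylor (add_monomial a k x) (fun w => g w + RtoC x * Cpow w k)%C.
Proof.
  intros Hg w Hw.
  eapply is_series_ext;
    [|exact (is_series_plus _ _ _ _ (Hg w Hw)
               (is_series_delta (K := C_AbsRing) k (RtoC x * Cpow w k)%C))].
  intros j; unfold add_monomial; cbv beta. rewrite RtoC_plus.
  change (pow_n (K := C_Ring) w j) with (Cpow w j).
  destruct (Nat.eqb_spec j k) as [->|_].
  - change (RtoC (a k) * Cpow w k + RtoC x * Cpow w k = (RtoC (a k) + RtoC x) * Cpow w k)%C; ring.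
  - change (RtoC (a j) * Cpow w j + RtoC 0 = (RtoC (a j) + RtoC 0) * Cpow w j)%C; ring.
Qed.

Lemma is_series_deriv_add_monomial (a : nat -> R) (k : nat) (x r s : R) :
  is_series (fun j => INR j * a j * r ^ pred j) s ->
  is_series (fun j => INR j * add_monomial a k x j * r ^ pred j) (s + INR k * x * r ^ pred k).
Proof.
  intros Hs.
  eapply is_series_ext;
    [|exact (is_series_plus _ _ _ _ Hs (is_series_delta (K := R_AbsRing) k (INR k * x * r ^ pred k)))].
  intros j; unfold add_monomial; cbv beta.
  destruct (Nat.eqb_spec j k) as [->|_]; match goal with |- ?u = ?v => change (@eq R u v) end;
    change plus with Rplus; change zero with 0; ring.
Qed.

Lemma taylor_Fn_add_monomial (n : nat) (a : nat -> R) (k : nat) (x : R) : (1 <= k <= n)%nat ->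
  taylor_Fn n (add_monomial a k x) = taylor_Fn n a + INR k * ((a k + x) ^ 2 - a k ^ 2).
Proof.
  intros Hk. unfold taylor_Fn.
  rewrite <- (sum_n_m_delta k n (INR k * ((a k + x) ^ 2 - a k ^ 2))) by exact Hk.
  rewrite <- (sum_n_m_plus (G := R_AbelianMonoid)).
  apply sum_n_m_ext; intros j; unfold add_monomial; rewrite !pow2_abs.
  destruct (Nat.eqb_spec j k) as [->|_]; match goal with |- ?u = ?v => change (@eq R u v) end;
    change plus with Rplus; ring.
Qed.

Section Competitor.

Variables (b : nat -> R) (f : C -> C) (k m : nat) (c : R).
Hypotheses (Hf : bloch_admissible b f) (Hk : (1 <= k)%nat) (Hkm : (k < m)%nat)
  (Hc : 0 <= c) (Hck : INR m * c <= INR k * b k).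

Definition competitor_coef : nat -> R := add_monomial (add_monomial b k (- b k)) m c.

Definition competitor (w : C) : C := (f w + RtoC (- b k) * Cpow w k + RtoC c * Cpow w m)%C.

Lemma competitor_coef_nonneg (j : nat) : 0 <= competitor_coef j.
Proof.
  destruct Hf as (Hb0 & Hbpos & _).
  assert (Hbj : 0 <= b j) by (destruct j as [|j]; [lra|apply Hbpos; lia]).
  unfold competitor_coef, add_monomial.
  destruct (Nat.eqb_spec j k) as [Hjk|Hjk], (Nat.eqb_spec j m) as [Hjm|Hjm];
    try lia; try subst j; lra.
Qed.

Lemma competitor_coef_0 : competitor_coef 0%nat = 0.
Proof.
  destruct Hf as (Hb0 & _).
  unfold competitor_coef, add_monomial; rewrite Hb0.
  destruct (Nat.eqb_spec 0 k), (Nat.eqb_spec 0 m); lia || lra.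
Qed.

Lemma competitor_has_taylor : has_taylor competitor_coef competitor.
Proof.
  destruct Hf as (_ & _ & Htay & _).
  exact (has_taylor_add_monomial _ _ _ _ (has_taylor_add_monomial _ _ _ _ Htay)).
Qed.

Lemma monomial_shift_deriv_nonpos (r : R) : 0 <= r < 1 ->
  INR k * - b k * r ^ pred k + INR m * c * r ^ pred m <= 0.
Proof.
  intros Hr.
  assert (Hpow : r ^ pred m <= r ^ pred k).
  { replace (pred m) with (pred k + (pred m - pred k))%nat by lia. rewrite pow_add.
    assert (0 <= r ^ (pred m - pred k) <= 1)
      by (split; [apply pow_le|rewrite <- (pow1 (pred m - pred k)); apply pow_incr]; lra).
    assert (0 <= r ^ pred k) by (apply pow_le; lra). nra. }
  assert (0 <= INR m * c) by (apply Rmult_le_pos; [apply pos_INR|exact Hc]).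
  assert (0 <= r ^ pred m) by (apply pow_le; lra).
  nra.
Qed.

Lemma competitor_bloch_norm : Rbar_le (bloch_norm competitor) (Finite 1).
Proof.
  destruct Hf as (_ & _ & Htay & Hbloch).
  apply bloch_norm_leP. intros z l Hz Hl.
  set (r := Cmod z).
  assert (Hr : 0 <= r < 1) by (split; [apply Cmod_ge_0|exact Hz]).
  assert (Hrin : in_disc (RtoC r)) by (unfold in_disc; rewrite Cmod_R, Rabs_pos_eq; lra).
  destruct (has_taylor_is_derive b f Htay _ Hrin) as (Df & _ & HDf).
  assert (Hsb := taylor_deriv_real b f Htay r Df Hr HDf).
  assert (Hl_le := taylor_deriv_Cmod_le _ _ competitor_has_taylor z l _ competitor_coef_nonneg Hz Hl
                     (is_series_deriv_add_monomial _ m c r _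
                        (is_series_deriv_add_monomial _ k (- b k) r _ Hsb))).
  assert (HDf_le := proj1 (bloch_norm_leP f 1) Hbloch _ _ Hrin HDf).
  rewrite Cmod_R, Rabs_pos_eq in HDf_le by lra.
  rewrite (has_taylor_at_0 _ _ competitor_has_taylor), competitor_coef_0, Cmod_0.
  assert (Hre : Re Df <= Cmod Df) by (eapply Rle_trans; [apply Rle_abs|apply re_le_Cmod]).
  assert (Hshift := monomial_shift_deriv_nonpos r Hr).
  assert (Hf0 := Cmod_ge_0 (f 0)).
  assert (Hr2 : 0 <= 1 - r ^ 2) by nra.
  fold r. rewrite Rplus_0_l.
  apply Rle_trans with ((1 - r ^ 2) * Cmod Df); [apply Rmult_le_compat_l; lra|lra].
Qed.

Lemma competitor_admissible : bloch_admissible competitor_coef competitor.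
Proof.
  split; [|split; [|split]].
  - exact competitor_coef_0.
  - intros j _; apply competitor_coef_nonneg.
  - exact competitor_has_taylor.
  - exact competitor_bloch_norm.
Qed.

Lemma taylor_Fn_competitor (n : nat) : (m <= n)%nat ->
  taylor_Fn n competitor_coef =
  taylor_Fn n b - INR k * b k ^ 2 + INR m * ((b m + c) ^ 2 - b m ^ 2).
Proof.
  intros Hmn. unfold competitor_coef.
  rewrite !taylor_Fn_add_monomial by lia.
  unfold add_monomial.
  replace (Nat.eqb m k) with false by (symmetry; apply Nat.eqb_neq; lia).
  ring.
Qed.

End Competitor.

Theorem lemma2p1 (n : nat) (Hn : (2 <= n)%nat) (b : nat -> R) (f : C -> C)
  (Hf : bloch_admissible b f)
  (Hext : forall (a : nat -> R) (g : C -> C), bloch_admissible a g -> taylor_Fn n a <= taylor_Fn n b)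
  (k m : nat) (Hk : (1 <= k)%nat) (Hkm : (k < m)%nat) (Hmn : (m <= n)%nat)
  (Hbk : 0 < b k) :
  b m <= (INR m - INR k) / (2 * INR m) * b k.
Proof.
  assert (HmR : 0 < INR m) by (apply lt_0_INR; lia).
  assert (HkR : 0 < INR k) by (apply lt_0_INR; lia).
  set (c := INR k / INR m * b k).
  assert (Hc : 0 <= c) by (unfold c; apply Rmult_le_pos; [apply Rlt_le, Rdiv_lt_0_compat|]; lra).
  assert (Hck : INR m * c <= INR k * b k) by (unfold c; right; field; lra).
  assert (HF := Hext _ _ (competitor_admissible b f k m c Hf Hk Hkm Hc Hck)).
  rewrite taylor_Fn_competitor in HF by lia.
  assert (Hgain : INR k * b k * (2 * b m + c - b k) <= 0)
    by (replace (INR k * b k * (2 * b m + c - b k)) with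
          (- INR k * b k ^ 2 + INR m * ((b m + c) ^ 2 - b m ^ 2)) by (unfold c; field; lra); lra).
  assert (2 * b m + c - b k <= 0).
  { apply (Rmult_le_reg_l (INR k * b k)); [nra|lra]. }
  replace ((INR m - INR k) / (2 * INR m) * b k) with ((b k - c) / 2) by (unfold c; field; lra).
  lra.
Qed.
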